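(* Let $N\ge 10^{40}$ be real, let $\mathcal{A}=\mathbb{Z}\cap(N,N+3N^{2/3})$, $X=\max\mathcal{A}$, $z=X^{1/5}$ and $y=X^{1/1.85}$. Then $$\sum_{\substack{q\text{ prime}\\ z\le q<y}}|\mathcal{A}_{q^2}|\le 0.03\,|\mathcal{A}|^{0.82}.$$
   Context: For a positive integer $d$, $\mathcal{A}_d=\{a\in\mathcal{A}: d\mid a\}$, and $|\cdot|$ denotes cardinality. *)

From Stdlib Require Import Bool Reals Lra Lia ZArith Arith List Znumtheory.
Import ListNotations.
Open Scope R_scope.
Open Scope bool_scope.

(* Membership in A = Z ∩ (N, N + 3 N^{2/3}).  Since N >= 10^40 > 0, every
   element of A is a positive integer, so we enumerate A inside nat. *)
Definition inA (N : R) (n : nat) : bool :=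
  if Rlt_dec N (INR n) then
    if Rlt_dec (INR n) (N + 3 * Rpower N (2/3)) then true else false
  else false.

(* Every n in A satisfies n < N + 3N^{2/3} < up(N + 3N^{2/3}). *)
Definition Abound (N : R) : nat := Z.to_nat (up (N + 3 * Rpower N (2/3))).

Definition Alist (N : R) : list nat := filter (inA N) (seq 0 (Abound N)).

Definition Acard (N : R) : nat := length (Alist N).

Definition Acard_div (N : R) (d : nat) : nat :=
  length (filter (fun n => Nat.eqb (Nat.modulo n d) 0) (Alist N)).

Definition Xmax (N : R) : R := INR (fold_right Nat.max 0%nat (Alist N)).

Definition primeb (q : nat) : bool :=
  if prime_dec (Z.of_nat q) then true else false.

(* sum_{q prime, z <= q < y} |A_{q^2}| ; all such q are < up y. *)
Definition prime_square_sum (N z y : R) : nat :=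
  fold_right Nat.add 0%nat
    (map (fun q => Acard_div N (q * q))
       (filter (fun q => (primeb q &&
                  (if Rle_dec z (INR q) then true else false)) &&
                  (if Rlt_dec (INR q) y then true else false))
          (seq 0 (Z.to_nat (up y))))).

(* Write L = 3 N^(2/3) for the length of the interval, so |A_d| <= L/d + 1.
   With Q = N^(2/5) (so L < Q^2), split the primes q >= z >= N^(1/5):
   - q < Q: |A_{q^2}| <= L/q^2 + 1, and sum_{q >= z} L/q^2 <= L/(z-1) by
     telescoping, plus at most Q + 1 such q;
   - q >= Q: |A_{q^2}| <= 1, and a nonempty A_{q^2} contains some q^2 m with
     m <= (N + L)/Q^2; for each fixed m, two such q < q' satisfy
     2Q (q' - q) <= (q'^2 - q^2) m < L, so at most L/(2Q) + 1 of them occur.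
   With t = N^(1/75) >= 3 everything is O(t^35), whereas |A|^0.82 >= t^41. *)

From Stdlib Require Import Reals Lra Lia List Sorting.Sorted ZArith Bool.
Import ListNotations.
Open Scope R_scope.

Lemma StronglySorted_seq s n : StronglySorted lt (seq s n).
Proof.
  revert s; induction n as [|n IH]; intros s; constructor; auto.
  apply Forall_forall; intros x Hx; apply in_seq in Hx; lia.
Qed.

Lemma StronglySorted_filter {A} (Rel : A -> A -> Prop) (P : A -> bool) l :
  StronglySorted Rel l -> StronglySorted Rel (filter P l).
Proof.
  induction 1 as [|x l Hl IH Hx]; simpl; [constructor|].
  destruct (P x); auto. constructor; auto.
  apply Forall_forall; intros y Hy; apply filter_In in Hy as [Hy _].
  exact (proj1 (Forall_forall _ _) Hx y Hy).
Qed.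

Lemma StronglySorted_strengthen {A} (Rel Rel' : A -> A -> Prop) l :
  (forall x y, In x l -> In y l -> Rel x y -> Rel' x y) ->
  StronglySorted Rel l -> StronglySorted Rel' l.
Proof.
  intros Himp Hl; induction Hl as [|x l Hl IH Hx]; constructor.
  - apply IH; intros u v Hu Hv; apply Himp; right; assumption.
  - apply Forall_forall; intros y Hy; apply Himp; [left; reflexivity | right; exact Hy |].
    exact (proj1 (Forall_forall _ _) Hx y Hy).
Qed.

Lemma sparse_spread (g : nat) x r :
  StronglySorted (fun u v => u + g <= v)%nat (x :: r) ->
  exists y, In y (x :: r) /\ (x + g * length r <= y)%nat.
Proof.
  revert x; induction r as [|b r IH]; intros x Hs.
  - exists x; split; [left; reflexivity | simpl; lia].
  - apply StronglySorted_inv in Hs as [Hs Hx].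
    destruct (IH b Hs) as [y [Hy Hby]].
    inversion Hx; subst. exists y; split; [right; exact Hy | simpl length; nia].
Qed.

Lemma sparse_length_le (g : nat) (W : R) l :
  (0 < g)%nat -> 0 <= W -> StronglySorted lt l ->
  (forall x y, In x l -> In y l -> (x < y)%nat -> (x + g <= y)%nat) ->
  (forall x y, In x l -> In y l -> INR y - INR x < W) ->
  INR (length l) <= W / INR g + 1.
Proof.
  intros Hg HW Hl Hgap Hdiam.
  assert (Hg' : 0 < INR g) by (apply lt_0_INR; exact Hg).
  assert (HWg : 0 <= W / INR g)
    by (apply Rmult_le_pos; [lra | left; apply Rinv_0_lt_compat; lra]).
  destruct l as [|x r]; [simpl; lra|].
  assert (Hs : StronglySorted (fun u v => u + g <= v)%nat (x :: r))
    by (apply (StronglySorted_strengthen lt); auto).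
  destruct (sparse_spread g x r Hs) as [y [Hy Hxy]].
  assert (Hd := Hdiam x y (or_introl eq_refl) Hy).
  apply le_INR in Hxy; rewrite plus_INR, mult_INR in Hxy.
  cbn [length]; rewrite S_INR.
  enough (INR (length r) <= W / INR g) by lra.
  apply (Rmult_le_reg_l (INR g)); [exact Hg'|].
  replace (INR g * (W / INR g)) with W by (field; lra); lra.
Qed.

Fixpoint sumR {A} (f : A -> R) (l : list A) : R :=
  match l with [] => 0 | x :: r => f x + sumR f r end.

Lemma INR_sum_map {A} (f : A -> nat) l :
  INR (fold_right Nat.add 0%nat (map f l)) = sumR (fun x => INR (f x)) l.
Proof. induction l as [|x l IH]; simpl; [reflexivity|]. rewrite plus_INR, IH; reflexivity. Qed.

Lemma sumR_le {A} (f g : A -> R) l :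
  (forall x, In x l -> f x <= g x) -> sumR f l <= sumR g l.
Proof.
  induction l as [|x l IH]; simpl; intros H; [lra|].
  apply Rplus_le_compat; auto.
Qed.

Lemma sumR_plus {A} (f g : A -> R) l :
  sumR (fun x => f x + g x) l = sumR f l + sumR g l.
Proof. induction l as [|x l IH]; simpl; [lra|]. rewrite IH; ring. Qed.

Lemma sumR_scal {A} c (f : A -> R) l : sumR (fun x => c * f x) l = c * sumR f l.
Proof. induction l as [|x l IH]; simpl; [ring|]. rewrite IH; ring. Qed.

Lemma sumR_indicator {A} (P : A -> bool) l :
  sumR (fun x => if P x then 1 else 0) l = INR (length (filter P l)).
Proof.
  induction l as [|x l IH]; simpl; [reflexivity|].
  destruct (P x); cbn [length]; rewrite ?S_INR, IH; ring.
Qed.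

Lemma sumR_const_le {A} (f : A -> R) c l :
  (forall x, In x l -> f x <= c) -> sumR f l <= c * INR (length l).
Proof.
  intros H; eapply Rle_trans; [apply (sumR_le f (fun _ => c)); exact H|].
  clear H; induction l as [|x l IH]; cbn [sumR length]; [simpl; lra|].
  rewrite S_INR; lra.
Qed.

(* Telescoping: [1/x^2 + 1/x <= 1/(x-1)] for [x > 1]. *)
Lemma sum_inv_sq_le a l :
  1 < a -> StronglySorted lt l -> (forall x, In x l -> a <= INR x) ->
  sumR (fun x => / INR x ^ 2) l <= / (a - 1).
Proof.
  intros Ha Hl; revert a Ha; induction Hl as [|x l Hl IH Hx]; intros a Ha Hge; cbn [sumR].
  - apply Rlt_le, Rinv_0_lt_compat; lra.
  - assert (Hax := Hge x (or_introl eq_refl)).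
    assert (Htail : sumR (fun x => / INR x ^ 2) l <= / INR x).
    { replace (/ INR x) with (/ (INR x + 1 - 1)) by (f_equal; ring).
      apply IH; [lra|]. intros y Hy.
      assert (x < y)%nat by exact (proj1 (Forall_forall _ _) Hx y Hy).
      rewrite <- S_INR; apply le_INR; lia. }
    assert (Hstep : / INR x ^ 2 + / INR x <= / (INR x - 1)).
    { assert (Hsq : 0 < INR x ^ 2) by (apply pow_lt; lra).
      apply (Rmult_le_reg_r (INR x ^ 2 * (INR x - 1))); [apply Rmult_lt_0_compat; lra|].
      field_simplify; lra. }
    assert (/ (INR x - 1) <= / (a - 1)) by (apply Rinv_le_contravar; lra).
    lra.
Qed.

Lemma length_filter_le_sumR {A B} (P : A -> bool) (Pm : B -> A -> bool) ms l :
  (forall x, In x l -> P x = true -> exists m, In m ms /\ Pm m x = true) ->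
  INR (length (filter P l)) <= sumR (fun m => INR (length (filter (Pm m) l))) ms.
Proof.
  induction l as [|x l IH]; intros Hcov.
  - clear Hcov; simpl; induction ms as [|m ms IHm]; simpl; lra.
  - assert (Hsplit : sumR (fun m => INR (length (filter (Pm m) (x :: l)))) ms
                   = INR (length (filter (fun m => Pm m x) ms))
                     + sumR (fun m => INR (length (filter (Pm m) l))) ms).
    { clear; induction ms as [|m ms IHm]; cbn [sumR]; [simpl; lra|].
      rewrite IHm; simpl; destruct (Pm m x); cbn [length]; rewrite ?S_INR; ring. }
    rewrite Hsplit.
    assert (IH' := IH (fun y Hy => Hcov y (or_intror Hy))).
    assert (H0 := pos_INR (length (filter (fun m => Pm m x) ms))).
    simpl filter; destruct (P x) eqn:Px; [|lra].
    destruct (Hcov x (or_introl eq_refl) Px) as [m [Hm Hmx]].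
    assert (Hin : In m (filter (fun m => Pm m x) ms)) by (apply filter_In; auto).
    destruct (filter (fun m => Pm m x) ms) as [|m' r]; [destruct Hin|].
    cbn [length]; rewrite !S_INR.
    assert (0 <= INR (length r)) by apply pos_INR. lra.
Qed.

Lemma up_nat r : 0 < r -> INR (Z.to_nat (up r)) = IZR (up r) /\ r < IZR (up r) <= r + 1.
Proof.
  intros Hr; destruct (archimed r) as [H1 H2].
  assert (Hp : (0 < up r)%Z) by (apply lt_IZR; lra).
  split; [|lra]. rewrite INR_IZR_INZ, Z2Nat.id; [reflexivity | lia].
Qed.

Definition Awidth (N : R) : R := 3 * Rpower N (2/3).

Lemma Awidth_pos N : 0 < Awidth N.
Proof. unfold Awidth, Rpower; assert (0 < exp (2/3 * ln N)) by apply exp_pos; lra. Qed.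

Lemma Rpower_ge1 x a : 1 <= x -> 0 <= a -> 1 <= Rpower x a.
Proof. intros Hx Ha; rewrite <- (Rpower_O x) by lra; apply Rle_Rpower; lra. Qed.

Lemma Awidth_ge3 N : 1 <= N -> 3 <= Awidth N.
Proof. intros HN; unfold Awidth; assert (1 <= Rpower N (2/3)) by (apply Rpower_ge1; lra); lra. Qed.

Lemma inA_spec N n : inA N n = true <-> N < INR n < N + Awidth N.
Proof.
  unfold inA, Awidth.
  destruct (Rlt_dec N (INR n)), (Rlt_dec (INR n) (N + 3 * Rpower N (2/3)));
    split; intros; (discriminate || tauto || lra).
Qed.

Lemma In_Alist N n : In n (Alist N) -> N < INR n < N + Awidth N.
Proof. intros H; apply filter_In in H as [_ H]; apply inA_spec, H. Qed.

Lemma Alist_sorted N : StronglySorted lt (Alist N).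
Proof. apply StronglySorted_filter, StronglySorted_seq. Qed.

Lemma Acard_div_le N d : (1 <= d)%nat -> INR (Acard_div N d) <= Awidth N / INR d + 1.
Proof.
  intros Hd; unfold Acard_div.
  assert (HW := Awidth_pos N).
  apply sparse_length_le; auto using Rlt_le, StronglySorted_filter, Alist_sorted.
  - intros x y Hx Hy Hxy.
    apply filter_In in Hx as [_ Hx], Hy as [_ Hy].
    apply Nat.eqb_eq, Nat.Div0.mod_divides in Hx as [a ->], Hy as [b ->].
    assert (a < b)%nat by nia. nia.
  - intros x y Hx Hy.
    apply filter_In in Hx as [Hx _], Hy as [Hy _].
    apply In_Alist in Hx, Hy. lra.
Qed.

Lemma Acard_ge N : 1 <= N -> Awidth N - 2 <= INR (Acard N).
Proof.
  intros HN; assert (HL := Awidth_ge3 N HN).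
  destruct (up_nat N) as [E0 [A0 B0]]; [lra|].
  destruct (up_nat (N + Awidth N)) as [E1 [A1 B1]]; [lra|].
  set (n0 := Z.to_nat (up N)) in E0; set (n1 := Z.to_nat (up (N + Awidth N))) in E1.
  assert (Hlt : (n0 + 1 <= n1)%nat) by (apply INR_le; rewrite plus_INR, E0, E1; simpl; lra).
  assert (Hincl : incl (seq n0 (n1 - n0 - 1)) (Alist N)).
  { intros x Hx; apply in_seq in Hx.
    assert (Hlo : INR n0 <= INR x) by (apply le_INR; lia).
    assert (Hhi : INR (x + 2) <= INR n1) by (apply le_INR; lia).
    rewrite plus_INR in Hhi.
    apply filter_In; split.
    - apply in_seq; unfold Abound, Awidth in *; fold n1; lia.
    - apply inA_spec; simpl in *; lra. }
  assert (Hk := le_INR _ _ (NoDup_incl_length (seq_NoDup _ _) Hincl)).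
  rewrite length_seq, !minus_INR in Hk by lia.
  unfold Acard; simpl in Hk; lra.
Qed.

Lemma Xmax_gt N : 1 <= N -> N < Xmax N.
Proof.
  intros HN; assert (HL := Awidth_ge3 N HN).
  destruct (up_nat N) as [E0 [A0 B0]]; [lra|].
  destruct (up_nat (N + Awidth N)) as [E1 [A1 B1]]; [lra|].
  assert (Hin : In (Z.to_nat (up N)) (Alist N)).
  { apply filter_In; split.
    - apply in_seq; split; [lia|]. apply INR_lt; unfold Abound.
      fold (Awidth N); simpl; rewrite E0, E1; lra.
    - apply inA_spec; rewrite E0; lra. }
  assert (Hmax : (Z.to_nat (up N) <= list_max (Alist N))%nat).
  { apply (proj1 (Forall_forall _ _) (proj1 (list_max_le _ _) (le_n _))), Hin. }
  unfold Xmax; unfold list_max in Hmax; apply le_INR in Hmax; lra.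
Qed.

Definition Rleb (a b : R) : bool := if Rle_dec a b then true else false.

Lemma Rleb_spec a b : Rleb a b = true <-> a <= b.
Proof. unfold Rleb; destruct (Rle_dec a b); split; (discriminate || tauto). Qed.

Lemma length_filter_lt_le Q l : 0 < Q -> StronglySorted lt l ->
  INR (length (filter (fun q => negb (Rleb Q (INR q))) l)) <= Q + 1.
Proof.
  intros HQ Hl.
  eapply Rle_trans; [apply (sparse_length_le 1 Q) | simpl INR; rewrite Rdiv_1_r; lra];
    auto using Rlt_le, StronglySorted_filter; [intros; lia|].
  intros x y Hx Hy; apply filter_In in Hx as [_ Hx], Hy as [_ Hy].
  apply negb_true_iff in Hy; rewrite <- not_true_iff_false, Rleb_spec in Hy.
  assert (0 <= INR x) by apply pos_INR. lra.
Qed.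

Lemma length_filter_sq_mul_le N Q m l : 0 < Q -> (1 <= m)%nat -> StronglySorted lt l ->
  INR (length (filter (fun q => Rleb Q (INR q) && inA N (q * q * m)) l))
  <= Awidth N / (2 * Q) + 1.
Proof.
  intros HQ Hm Hl.
  assert (HL := Awidth_pos N).
  assert (HW : 0 < Awidth N / (2 * Q)) by (apply Rdiv_lt_0_compat; lra).
  eapply Rle_trans;
    [apply (sparse_length_le 1 (Awidth N / (2 * Q))) | simpl INR; rewrite Rdiv_1_r; lra];
    auto using Rlt_le, StronglySorted_filter; [intros; lia|].
  intros x y Hx Hy; apply filter_In in Hx as [_ Hx], Hy as [_ Hy].
  apply andb_prop in Hx as [HQx Hx], Hy as [_ Hy].
  apply Rleb_spec in HQx; apply inA_spec in Hx, Hy; rewrite !mult_INR in Hx, Hy.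
  destruct (le_lt_dec y x) as [Hyx | Hxy]; [apply le_INR in Hyx; lra|].
  assert (HM : 1 <= INR m) by (apply (le_INR 1); exact Hm).
  assert (HY : INR x + 1 <= INR y) by (rewrite <- S_INR; apply le_INR; exact Hxy).
  assert (H2Q : (INR y - INR x) * (2 * Q) <= (INR y - INR x) * (INR x + INR y))
    by (apply Rmult_le_compat_l; lra).
  assert (Hsq : (INR y - INR x) * (INR x + INR y) <= (INR y * INR y - INR x * INR x) * INR m)
    by (replace (INR y * INR y - INR x * INR x) with ((INR y - INR x) * (INR x + INR y))
          by ring; rewrite <- (Rmult_1_r ((INR y - INR x) * (INR x + INR y))) at 1;
        apply Rmult_le_compat_l; [apply Rmult_le_pos|]; lra).
  apply (Rmult_lt_reg_r (2 * Q)); [lra|].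
  replace (Awidth N / (2 * Q) * (2 * Q)) with (Awidth N) by (field; lra). lra.
Qed.

Section LargeSquares.

Variables N Q : R.
Hypothesis HN : 0 < N.
Hypothesis HQ : 0 < Q.
Hypothesis HQwidth : Awidth N < Q ^ 2.

Lemma Acard_div_sq_split q : (1 <= q)%nat ->
  INR (Acard_div N (q * q)) <=
  Awidth N * / INR q ^ 2 + (if negb (Rleb Q (INR q)) then 1 else 0)
  + (if Rleb Q (INR q) && negb (Acard_div N (q * q) =? 0)%nat then 1 else 0).
Proof.
  intros Hq.
  assert (Hd := Acard_div_le N (q * q) ltac:(nia)).
  assert (Hq1 : 1 <= INR q) by (apply (le_INR 1); exact Hq).
  assert (Hq2 : 0 < INR q ^ 2) by (apply pow_lt; lra).
  assert (Hfrac : 0 <= Awidth N * / INR q ^ 2)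
    by (apply Rmult_le_pos; [apply Rlt_le, Awidth_pos | apply Rlt_le, Rinv_0_lt_compat, Hq2]).
  rewrite mult_INR in Hd; replace (INR q * INR q) with (INR q ^ 2) in Hd by ring.
  unfold Rdiv in Hd.
  destruct (Rleb Q (INR q)) eqn:HQq; cbn [negb andb]; [|lra].
  apply Rleb_spec in HQq.
  assert (Hsmall : Awidth N * / INR q ^ 2 < 1).
  { apply (Rmult_lt_reg_r (INR q ^ 2)); [exact Hq2|].
    rewrite Rmult_assoc, Rinv_l, Rmult_1_r, Rmult_1_l by lra.
    assert (Q ^ 2 <= INR q ^ 2) by (apply pow_incr; lra). lra. }
  destruct (Acard_div N (q * q) =? 0)%nat eqn:H0; cbn [negb].
  - apply Nat.eqb_eq in H0; rewrite H0; change (INR 0) with 0; lra.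
  - assert (Hlt2 : (Acard_div N (q * q) < 2)%nat) by (apply INR_lt; simpl; lra).
    assert (INR (Acard_div N (q * q)) <= 1) by (apply (le_INR _ 1); lia). lra.
Qed.

Let M := Z.to_nat (up ((N + Awidth N) / Q ^ 2)).

Lemma Acard_div_sq_witness q : Q <= INR q -> Acard_div N (q * q) <> 0%nat ->
  exists m, In m (seq 1 M) /\ Rleb Q (INR q) && inA N (q * q * m) = true.
Proof.
  intros HQq Hne; unfold Acard_div in Hne.
  destruct (filter (fun n => (n mod (q * q) =? 0)%nat) (Alist N)) as [|n r] eqn:Hf;
    [contradiction|].
  assert (Hn : In n (filter (fun n => (n mod (q * q) =? 0)%nat) (Alist N)))
    by (rewrite Hf; left; reflexivity).
  apply filter_In in Hn as [Hn Hdiv].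
  apply Nat.eqb_eq, Nat.Div0.mod_divides in Hdiv as [c Hc].
  assert (HnA := In_Alist N n Hn).
  assert (HL := Awidth_pos N).
  assert (Hnc : INR n = INR q ^ 2 * INR c) by (rewrite Hc, !mult_INR; ring).
  assert (HQ2 : Q ^ 2 <= INR q ^ 2) by (apply pow_incr; lra).
  assert (Hc0 : 0 <= INR c) by apply pos_INR.
  destruct (up_nat ((N + Awidth N) / Q ^ 2)) as [EM [AM _]];
    [apply Rdiv_lt_0_compat; [lra | apply pow_lt; lra]|].
  exists c; split.
  - apply in_seq; split.
    + destruct c; [rewrite Hnc in HnA; simpl in HnA; lra | lia].
    + enough (Hlt : INR c < INR M) by (apply INR_lt in Hlt; lia).
      unfold M; rewrite EM; apply Rle_lt_trans with ((N + Awidth N) / Q ^ 2); [|lra].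
      apply (Rmult_le_reg_r (Q ^ 2)); [apply pow_lt; lra|].
      replace ((N + Awidth N) / Q ^ 2 * Q ^ 2) with (N + Awidth N) by (field; lra).
      nra.
  - apply andb_true_intro; split; [apply Rleb_spec; exact HQq|].
    rewrite <- Hc; apply filter_In in Hn as [_ Hn]; exact Hn.
Qed.

Lemma sum_Acard_div_sq_le a l :
  1 < a -> StronglySorted lt l -> (forall q, In q l -> a <= INR q) ->
  sumR (fun q => INR (Acard_div N (q * q))) l <=
  Awidth N / (a - 1) + (Q + 1) + (Awidth N / (2 * Q) + 1) * ((N + Awidth N) / Q ^ 2 + 1).
Proof.
  intros Ha Hl Hge.
  assert (HL := Awidth_pos N).
  eapply Rle_trans.
  { apply sumR_le; intros q Hq; apply Acard_div_sq_split.
    destruct q; [specialize (Hge 0%nat Hq); simpl in Hge; lra | lia]. }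
  rewrite !sumR_plus, sumR_scal, !sumR_indicator.
  assert (Hinv := sum_inv_sq_le a l Ha Hl Hge).
  assert (Hsmall := length_filter_lt_le Q l HQ Hl).
  assert (Hlarge : INR (length (filter (fun q =>
              Rleb Q (INR q) && negb (Acard_div N (q * q) =? 0)%nat) l))
            <= (Awidth N / (2 * Q) + 1) * INR M).
  { eapply Rle_trans.
    { apply (length_filter_le_sumR _ (fun m q => Rleb Q (INR q) && inA N (q * q * m))).
      intros q _ Hq; apply andb_prop in Hq as [HQq Hne].
      apply Acard_div_sq_witness; [apply Rleb_spec, HQq|].
      apply negb_true_iff, Nat.eqb_neq in Hne; exact Hne. }
    rewrite <- (length_seq M 1) at 2; apply sumR_const_le.
    intros m Hm; apply in_seq in Hm.
    apply length_filter_sq_mul_le; [exact HQ | lia | exact Hl]. }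
  destruct (up_nat ((N + Awidth N) / Q ^ 2)) as [EM [_ BM]];
    [apply Rdiv_lt_0_compat; [lra | apply pow_lt; lra]|].
  fold M in EM.
  assert (Hcoef : 0 <= Awidth N / (2 * Q) + 1)
    by (assert (0 < Awidth N / (2 * Q)) by (apply Rdiv_lt_0_compat; lra); lra).
  assert (Awidth N * sumR (fun x => / INR x ^ 2) l <= Awidth N / (a - 1))
    by (apply Rmult_le_compat_l; lra).
  assert ((Awidth N / (2 * Q) + 1) * INR M
          <= (Awidth N / (2 * Q) + 1) * ((N + Awidth N) / Q ^ 2 + 1))
    by (apply Rmult_le_compat_l; lra).
  lra.
Qed.

End LargeSquares.

Lemma Rpower_mult_INR x a k : 0 < x -> Rpower x (INR k * a) = Rpower x a ^ k.
Proof.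
  intros Hx; rewrite <- Rpower_pow by (unfold Rpower; apply exp_pos).
  rewrite Rpower_mult, Rmult_comm; reflexivity.
Qed.

Lemma three_terms_le t : 3 <= t ->
  3 * t ^ 50 / (t ^ 15 - 1) + (t ^ 30 + 1)
  + (3 * t ^ 50 / (2 * t ^ 30) + 1) * ((t ^ 75 + 3 * t ^ 50) / (t ^ 30) ^ 2 + 1)
  <= 3 / 100 * t ^ 41.
Proof.
  intros Ht.
  assert (Hpow : forall k c, c = 3 ^ k -> c <= t ^ k)
    by (intros k c ->; apply pow_incr; lra).
  assert (T5 : 243 <= t ^ 5) by (apply Hpow; simpl; lra).
  assert (T6 : 729 <= t ^ 6) by (apply Hpow; simpl; lra).
  assert (T10 : 59049 <= t ^ 10) by (apply Hpow; simpl; lra).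
  assert (T15 : 14348907 <= t ^ 15) by (apply Hpow; simpl; lra).
  assert (T20 : 0 < t ^ 20) by (apply pow_lt; lra).
  assert (T35 : 0 < t ^ 35) by (apply pow_lt; lra).
  assert (E1 : 3 * t ^ 50 / (t ^ 15 - 1) <= 6 * t ^ 35).
  { apply (Rmult_le_reg_r (t ^ 15 - 1)); [lra|].
    replace (3 * t ^ 50 / (t ^ 15 - 1) * (t ^ 15 - 1)) with (t ^ 15 * (3 * t ^ 35))
      by (field; lra).
    nra. }
  assert (E2 : t ^ 30 + 1 <= t ^ 35)
    by (replace (t ^ 35) with (t ^ 30 * t ^ 5) by ring;
        assert (1 <= t ^ 30) by (apply pow_R1_Rle; lra); nra).
  assert (E3 : (3 * t ^ 50 / (2 * t ^ 30) + 1) * ((t ^ 75 + 3 * t ^ 50) / (t ^ 30) ^ 2 + 1)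
               <= 4 * t ^ 35).
  { replace (3 * t ^ 50 / (2 * t ^ 30)) with (3 / 2 * t ^ 20)
      by (field; lra).
    replace ((t ^ 75 + 3 * t ^ 50) / (t ^ 30) ^ 2) with (t ^ 15 + 3 / t ^ 10)
      by (field; lra).
    assert (3 / t ^ 10 <= 1)
      by (apply (Rmult_le_reg_r (t ^ 10)); [lra|]; field_simplify; lra).
    apply Rle_trans with ((3 / 2 * t ^ 20 + 1) * (t ^ 15 + 2)); [apply Rmult_le_compat_l; lra|].
    replace (t ^ 35) with (t ^ 20 * t ^ 15) by ring. nra. }
  replace (t ^ 41) with (t ^ 6 * t ^ 35) by ring. nra.
Qed.

Lemma Rpower_root75_ge3 N : 10 ^ 40 <= N -> 3 <= Rpower N (1 / 75).
Proof.
  intros HN; destruct (Rle_lt_dec 3 (Rpower N (1 / 75))) as [h | h]; [exact h|].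
  assert (Hle : Rpower N (1 / 75) ^ 75 <= 3 ^ 75)
    by (apply pow_incr; split; [unfold Rpower; apply Rlt_le, exp_pos | lra]).
  assert (HN0 : 0 < N) by (simpl in HN; lra).
  rewrite <- Rpower_mult_INR in Hle by exact HN0.
  replace (INR 75 * (1 / 75)) with 1 in Hle by (simpl; field).
  rewrite Rpower_1 in Hle by exact HN0.
  simpl in HN, Hle; lra.
Qed.

Lemma Acard_Rpower_ge N : 1 <= N ->
  Rpower N (41 / 75) <= Rpower (INR (Acard N)) (82 / 100).
Proof.
  intros HN.
  assert (Hcard := Acard_ge N HN); unfold Awidth in Hcard.
  assert (H1 : 1 <= Rpower N (2 / 3)) by (apply Rpower_ge1; lra).
  replace (41 / 75) with (2 / 3 * (82 / 100)) by field.
  rewrite <- Rpower_mult; apply Rle_Rpower_l; lra.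
Qed.

Theorem lemma4p3 (N : R) (hN : 10 ^ 40 <= N) :
  let X := Xmax N in
  let z := Rpower X (1 / 5) in
  let y := Rpower X (1 / (185 / 100)) in
  INR (prime_square_sum N z y) <= 3 / 100 * Rpower (INR (Acard N)) (82 / 100).
Proof.
  intros X z y.
  assert (HN : 1 <= N) by (simpl in hN; lra).
  assert (Ht3 := Rpower_root75_ge3 N hN).
  set (t := Rpower N (1 / 75)) in *.
  assert (Ht : forall k, Rpower N (INR k / 75) = t ^ k)
    by (intros k; unfold t; rewrite <- Rpower_mult_INR by lra; f_equal; field).
  assert (EN : N = t ^ 75) by (rewrite <- Ht, <- (Rpower_1 N) at 1 by lra; f_equal; simpl; field).
  assert (EL : Awidth N = 3 * t ^ 50) by (unfold Awidth; rewrite <- Ht; do 2 f_equal; simpl; field).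
  assert (Hz : t ^ 15 <= z).
  { unfold z; rewrite <- Ht; replace (INR 15 / 75) with (1 / 5) by (simpl; field).
    apply Rle_Rpower_l; [lra|]. split; [lra|]. apply Rlt_le, Xmax_gt, HN. }
  assert (T10 : 3 ^ 10 <= t ^ 10) by (apply pow_incr; lra).
  assert (T15 : 3 ^ 15 <= t ^ 15) by (apply pow_incr; lra).
  assert (HQ : 0 < t ^ 30) by (apply pow_lt; lra).
  assert (HQw : Awidth N < (t ^ 30) ^ 2).
  { rewrite EL; replace ((t ^ 30) ^ 2) with (t ^ 10 * t ^ 50) by ring.
    assert (0 < t ^ 50) by (apply pow_lt; lra). simpl in T10; nra. }
  unfold prime_square_sum; rewrite INR_sum_map.
  eapply Rle_trans; [apply (sum_Acard_div_sq_le N (t ^ 30) ltac:(lra) HQ HQw (t ^ 15)) |].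
  - simpl in T15; lra.
  - apply StronglySorted_filter, StronglySorted_seq.
  - intros q Hq; apply filter_In in Hq as [_ Hq].
    destruct (Rle_dec z (INR q)); [lra|]. rewrite andb_false_r in Hq; discriminate.
  - assert (Hterms := three_terms_le t Ht3); rewrite <- EL, <- EN in Hterms.
    eapply Rle_trans; [exact Hterms|].
    rewrite <- Ht; apply Rmult_le_compat_l; [lra|].
    replace (INR 41 / 75) with (41 / 75) by (simpl; field); apply Acard_Rpower_ge, HN.
Qed.
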